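(* Let $(x^k,\lambda^k)_{k\ge0}$ be generated by the proximal ADMM applied to (P), and for $k\ge1$ let $E(k)=L_\rho(x^k,\lambda^k)+\sum_{i=0}^n\frac{1}{4\eta_i}\|x_i^k-x_i^{k-1}\|^2$. Then for every $k\ge1$, $$E(k+1)-E(k)\le\sum_{i=0}^{n-1}\frac{1}{\rho_i}\|\lambda_i^{k+1}-\lambda_i^k\|^2-\sum_{i=0}^n\frac{1}{4\eta_i}\Big(\|x_i^{k+1}-x_i^k\|^2+\|x_i^k-x_i^{k-1}\|^2\Big).$$
   Context: Let $n,d\ge1$, and let $f_0,\dots,f_n:\mathbb{R}^d\to\mathbb{R}$ and $\varphi:\mathbb{R}^d\to\mathbb{R}^d$ be continuously differentiable. Problem (P): minimize $\sum_{i=0}^n f_i(x_i)$ over $x=(x_0,\dots,x_n)\in(\mathbb{R}^d)^{n+1}$ subject to $x_{j+1}=\varphi(x_j)$ for $j=0,\dots,n-1$. For penalty parameters $\rho=(\rho_0,\dots,\rho_{n-1})$, $\rho_i>0$, and $\lambda=(\lambda_0,\dots,\lambda_{n-1})\in(\mathbb{R}^d)^n$ the augmented Lagrangian is $L_\rho(x,\lambda)=\sum_{i=0}^n f_i(x_i)+\sum_{i=0}^{n-1}\big(\langle\lambda_i,x_{i+1}-\varphi(x_i)\rangle+\frac{\rho_i}{2}\|x_{i+1}-\varphi(x_i)\|^2\big)$. Proximal ADMM: given $\eta_0,\dots,\eta_n>0$ and an initial point $(x^0,\lambda^0)$, for $k=0,1,\dots$, for $i=0,1,\dots,n$ in this order,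 $x_i^{k+1}$ is a (global) minimizer over $x_i\in\mathbb{R}^d$ of $L_\rho(x_0^{k+1},\dots,x_{i-1}^{k+1},x_i,x_{i+1}^k,\dots,x_n^k,\lambda^k)+\frac{1}{2\eta_i}\|x_i-x_i^k\|^2$ (assumed to exist), and then $\lambda_j^{k+1}=\lambda_j^k+\rho_j(x_{j+1}^{k+1}-\varphi(x_j^{k+1}))$ for $j=0,\dots,n-1$. *)

From HB Require Import structures.
From mathcomp Require Import all_boot all_order all_algebra.
From mathcomp Require Import all_classical all_reals all_analysis.
Set Implicit Arguments. Unset Strict Implicit. Unset Printing Implicit Defensive.
Import Order.TTheory GRing.Theory Num.Theory.
Import numFieldNormedType.Exports.
Local Open Scope ring_scope.

Definition dotv {R : realType} {d : nat} (u v : 'rV[R]_d) : R :=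
  \sum_(j < d) u 0 j * v 0 j.
Definition sqnorm {R : realType} {d : nat} (u : 'rV[R]_d) : R := dotv u u.

(* continuously differentiable: differentiable everywhere, and the
   derivative x |-> 'd f x is continuous (tested on every direction v,
   which in finite dimension is continuity of the derivative). *)
Definition C1 {R : realType} {d e : nat} (f : 'rV[R]_d -> 'rV[R]_e) : Prop :=
  (forall x, differentiable f x) /\ (forall v, continuous (fun x => 'd f x v)).
Definition C1r {R : realType} {d : nat} (f : 'rV[R]_d -> R) : Prop :=
  (forall x, differentiable f x) /\ (forall v, continuous (fun x => 'd f x v)).

(* Blocks x = (x_0,...,x_n) are encoded as nat-indexed families; only the
   indices 0..n (resp. 0..n-1 for multipliers) are ever used. *)
Definition augL {R : realType} {d : nat} (n : nat) (f : nat -> 'rV[R]_d -> R)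
  (phi : 'rV[R]_d -> 'rV[R]_d) (rho : nat -> R)
  (x : nat -> 'rV[R]_d) (lam : nat -> 'rV[R]_d) : R :=
  \sum_(0 <= i < n.+1) f i (x i)
  + \sum_(0 <= i < n) (dotv (lam i) (x i.+1 - phi (x i))
                       + rho i / 2 * sqnorm (x i.+1 - phi (x i))).

Definition gsPoint {R : realType} {d : nat} (xnew xold : nat -> 'rV[R]_d)
  (i : nat) (y : 'rV[R]_d) : nat -> 'rV[R]_d :=
  fun j => if (j < i)%N then xnew j else if j == i then y else xold j.

Definition energy {R : realType} {d : nat} (n : nat) (f : nat -> 'rV[R]_d -> R)
  (phi : 'rV[R]_d -> 'rV[R]_d) (rho eta : nat -> R)
  (x lam : nat -> nat -> 'rV[R]_d) (k : nat) : R :=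
  augL n f phi rho (x k) (lam k)
  + \sum_(0 <= i < n.+1) (4 * eta i)^-1 * sqnorm (x k i - x k.-1 i).

(* One proximal Gauss-Seidel sweep is a descent step for the augmented
   Lagrangian at fixed multipliers: comparing the i-th block minimizer with
   the previous iterate x_i^k, the intermediate points of the sweep
   telescope to L(x^{k+1}, lam^k) + sum_i ||x_i^{k+1} - x_i^k||^2 / (2 eta_i)
   <= L(x^k, lam^k).  The multiplier update raises L by
   sum_i <lam_i^{k+1} - lam_i^k, x_{i+1}^{k+1} - phi(x_i^{k+1})>, which is
   sum_i ||lam_i^{k+1} - lam_i^k||^2 / rho_i.  Splitting the proximal weight
   1/(2 eta_i) as 1/(4 eta_i) + 1/(4 eta_i), one half is absorbed by the
   energy term of E(k+1) and the inequality follows. *)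
From HB Require Import structures.
From mathcomp Require Import all_boot all_order all_algebra.
From mathcomp Require Import all_classical all_reals all_analysis.
From mathcomp Require Import ring lra.
Import Order.TTheory GRing.Theory Num.Theory.
Import numFieldNormedType.Exports.
Local Open Scope ring_scope.

Section InnerProduct.
Variables (R : realType) (d : nat).
Implicit Types (u v w : 'rV[R]_d) (a : R).

Lemma dotvBl u v w : dotv (u - v) w = dotv u w - dotv v w.
Proof. by rewrite /dotv -sumrB; apply: eq_bigr => j _; rewrite !mxE mulrBl. Qed.

Lemma dotvZl a u w : dotv (a *: u) w = a * dotv u w.
Proof. by rewrite /dotv mulr_sumr; apply: eq_bigr => j _; rewrite !mxE mulrA. Qed.

Lemma dotvZr a u w : dotv u (a *: w) = a * dotv u w.
Proof. by rewrite /dotv mulr_sumr; apply: eq_bigr => j _; rewrite !mxE mulrCA. Qed.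

Lemma sqnorm0 : sqnorm (0 : 'rV[R]_d) = 0.
Proof. by rewrite /sqnorm /dotv big1 // => j _; rewrite mxE mul0r. Qed.

Lemma sqnormZ_divl a u : a != 0 -> a^-1 * sqnorm (a *: u) = dotv (a *: u) u.
Proof. by move=> a0; rewrite /sqnorm dotvZr mulKf. Qed.

End InnerProduct.

Section GaussSeidelPoint.
Variables (R : realType) (d : nat) (xn xo : nat -> 'rV[R]_d).

Lemma gsPoint0 : gsPoint xn xo 0 (xo 0) = xo.
Proof. by apply: funext => j; rewrite /gsPoint; case: eqP => // ->. Qed.

Lemma gsPointS i : gsPoint xn xo i (xn i) = gsPoint xn xo i.+1 (xo i.+1).
Proof.
apply: funext => j; rewrite /gsPoint ltnS.
have [_|_|->] := ltngtP j i => //.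
by case: eqP => // ->.
Qed.

Lemma gsPoint_swept m y j : (j < m)%N -> gsPoint xn xo m y j = xn j.
Proof. by rewrite /gsPoint => ->. Qed.

End GaussSeidelPoint.

Section AugmentedLagrangian.
Context {R : realType} {d n : nat} {f : nat -> 'rV[R]_d -> R}.
Context {phi : 'rV[R]_d -> 'rV[R]_d} {rho : nat -> R}.

Local Notation L := (augL n f phi rho).

Lemma augL_eq_on (x y lam : nat -> 'rV[R]_d) :
  (forall j, (j <= n)%N -> x j = y j) -> L x lam = L y lam.
Proof.
move=> xy; rewrite /augL; congr (_ + _); apply: eq_big_nat => i /andP[_ hi].
  by rewrite xy.
by rewrite !xy // ltnW.
Qed.

Lemma augL_lamB (x lam lam' : nat -> 'rV[R]_d) :
  L x lam' - L x lam =
  \sum_(0 <= i < n) dotv (lam' i - lam i) (x i.+1 - phi (x i)).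
Proof.
rewrite /augL opprD addrACA subrr add0r -sumrB; apply: eq_bigr => i _.
rewrite dotvBl; lra.
Qed.

Lemma augL_multiplier_update {x lam lam' : nat -> 'rV[R]_d} :
  (forall i, (i < n)%N -> rho i != 0) ->
  (forall i, (i < n)%N -> lam' i = lam i + rho i *: (x i.+1 - phi (x i))) ->
  L x lam' - L x lam = \sum_(0 <= i < n) (rho i)^-1 * sqnorm (lam' i - lam i).
Proof.
move=> rho0 upd; rewrite augL_lamB; apply: eq_big_nat => i /andP[_ hi].
by rewrite upd // addrC addKr sqnormZ_divl ?rho0 // dotvZl dotvZr.
Qed.

Context {eta : nat -> R} {xn xo lam : nat -> 'rV[R]_d}.

Hypothesis block_min : forall i, (i <= n)%N -> forall y : 'rV[R]_d,
  L (gsPoint xn xo i (xn i)) lam + (2 * eta i)^-1 * sqnorm (xn i - xo i)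
  <= L (gsPoint xn xo i y) lam + (2 * eta i)^-1 * sqnorm (y - xo i).

Lemma gauss_seidel_descent m : (m <= n.+1)%N ->
  L (gsPoint xn xo m (xo m)) lam
  + \sum_(0 <= i < m) (2 * eta i)^-1 * sqnorm (xn i - xo i) <= L xo lam.
Proof.
elim: m => [_|m IH mn]; first by rewrite big_geq // addr0 gsPoint0.
have := @block_min m mn (xo m); rewrite subrr sqnorm0 mulr0 addr0 gsPointS.
by have := IH (ltnW mn); rewrite big_nat_recr //=; lra.
Qed.

Lemma proximal_sweep_descent :
  L xn lam + \sum_(0 <= i < n.+1) (2 * eta i)^-1 * sqnorm (xn i - xo i)
  <= L xo lam.
Proof.
have swept j : (j <= n)%N -> xn j = gsPoint xn xo n.+1 (xo n.+1) j.
  by move=> jn; rewrite gsPoint_swept.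
by rewrite (augL_eq_on _ _ _ swept); exact: gauss_seidel_descent.
Qed.

End AugmentedLagrangian.

Lemma sum_half_weights (R : realType) (m : nat) (eta a : nat -> R) :
  \sum_(0 <= i < m) (2 * eta i)^-1 * a i =
  2 * \sum_(0 <= i < m) (4 * eta i)^-1 * a i.
Proof.
rewrite mulr_sumr; apply: eq_bigr => i _.
by rewrite mulrA !invfM mulrA; congr (_ * _ * _); field.
Qed.

Theorem mainTheorem3 (R : realType) (n d : nat)
  (f : nat -> 'rV[R]_d -> R) (phi : 'rV[R]_d -> 'rV[R]_d)
  (rho eta : nat -> R)
  (x lam : nat -> nat -> 'rV[R]_d) :
  (1 <= n)%N -> (1 <= d)%N ->
  (forall i, (i <= n)%N -> C1r (f i)) ->
  C1 phi ->
  (forall i, (i < n)%N -> 0 < rho i) ->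
  (forall i, (i <= n)%N -> 0 < eta i) ->
  (forall k i, (i <= n)%N -> forall y : 'rV[R]_d,
      augL n f phi rho (gsPoint (x k.+1) (x k) i (x k.+1 i)) (lam k)
        + (2 * eta i)^-1 * sqnorm (x k.+1 i - x k i)
      <= augL n f phi rho (gsPoint (x k.+1) (x k) i y) (lam k)
        + (2 * eta i)^-1 * sqnorm (y - x k i)) ->
  (forall k j, (j < n)%N ->
      lam k.+1 j = lam k j + rho j *: (x k.+1 j.+1 - phi (x k.+1 j))) ->
  forall k, (1 <= k)%N ->
    energy n f phi rho eta x lam k.+1 - energy n f phi rho eta x lam k
    <= \sum_(0 <= i < n) (rho i)^-1 * sqnorm (lam k.+1 i - lam k i)
       - \sum_(0 <= i < n.+1) (4 * eta i)^-1 *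
           (sqnorm (x k.+1 i - x k i) + sqnorm (x k i - x k.-1 i)).
Proof.
move=> _ _ _ _ rho_gt0 _ block_min lam_upd k _.
have descent := proximal_sweep_descent (block_min k).
have dual := augL_multiplier_update (f := f)
  (fun i ni => lt0r_neq0 (rho_gt0 i ni)) (lam_upd k).
rewrite sum_half_weights in descent.
rewrite /energy /=.
under [X in _ <= _ - X]eq_bigr => i _ do rewrite mulrDr.
rewrite big_split /=; move: descent dual.
set Lnew := augL _ _ _ _ (x k.+1) (lam k.+1).
set Lmid := augL _ _ _ _ (x k.+1) (lam k).
set Lold := augL _ _ _ _ (x k) (lam k).
set Sdual := \sum_(0 <= i < n) _.
set S1 := \sum_(0 <= i < n.+1) _; set S0 := \sum_(0 <= i < n.+1) _.
lra.
Qed.
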